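(* Let $\omega\in\mathbb{R}^d$, $N\in\mathbb{N}$, $\rho>0$, $n\ge1$, and let $\Gamma\subset\mathbb{C}$ be finite with $0<\#\Gamma\le n$, such that every $\alpha\in\Gamma$ is $(N,\rho)$-linked to some $\beta\in\Gamma$. Let $\mathcal{E}\subseteq\Gamma$ be an equivalence class for the relation of being $(N,\rho)$-chain-linked. If $\mathcal{E}$ contains no odd $(N,\rho)$-loop, then there is a partition $\mathcal{E}=\Sigma_1\cup\Sigma_2$ such that: (i) if $\beta,\gamma\in\Sigma_1$ then $\beta$ and $\gamma$ are not $(N,\rho)$-linked, and likewise for $\Sigma_2$; (ii) if $\beta,\gamma\in\Sigma_1$ then $\beta$ and $\bar\gamma$ are $(nN,n\rho)$-linked, and likewise for $\Sigma_2$; (iii) if $\beta\in\Sigma_1$ and $\gamma\in\Sigma_2$ then $\beta$ and $\gamma$ are $(nN,n\rho)$-linked.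
   Context: For $k\in\mathbb{Z}^d$, $|k|=\sum_i|k_i|$. Two complex numbers $\alpha,\beta$ are $(N,\rho)$-linked if $|2i\pi\langle k,\omega\rangle-(\alpha-\bar\beta)|<\rho$ for some $k\in\mathbb{Z}^d$ with $|k|\le N$. An $(N,\rho)$-chain in $\Gamma$ of length $r-1$ is a sequence $\alpha_1,\dots,\alpha_r$ in $\Gamma$ with $\alpha_j$ and $\alpha_{j+1}$ $(N,\rho)$-linked for all $j$; $\alpha_1$ and $\alpha_r$ are then $(N,\rho)$-chain-linked. An $(N,\rho)$-loop is such a chain with $\alpha_1=\alpha_r$ (and $r\ge2$); it is odd if its length is odd. Under the stated hypothesis on $\Gamma$, being $(N,\rho)$-chain-linked is an equivalence relation on $\Gamma$. *)

From Stdlib Require Import Reals List ZArith.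
From Coquelicot Require Import Coquelicot.
Open Scope R_scope.

(* Vectors in Z^d / R^d are represented as functions nat -> _, of which only
   the coordinates 0..d-1 are used. *)

Definition l1norm (d : nat) (k : nat -> Z) : Z :=
  fold_right Z.add 0%Z (map (fun i => Z.abs (k i)) (seq 0 d)).

Definition dotZR (d : nat) (k : nat -> Z) (omega : nat -> R) : R :=
  fold_right Rplus 0 (map (fun i => IZR (k i) * omega i) (seq 0 d)).

Definition linked (d : nat) (omega : nat -> R) (N : nat) (rho : R)
  (alpha beta : C) : Prop :=
  exists k : nat -> Z, (l1norm d k <= Z.of_nat N)%Z /\
    Cmod (Ci * RtoC (2 * PI * dotZR d k omega) - (alpha - Cconj beta)) < rho.

Definition chain (d : nat) (omega : nat -> R) (N : nat) (rho : R)
  (Gamma : C -> Prop) (l : list C) : Prop :=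
  l <> nil /\ (forall x, In x l -> Gamma x) /\
  (forall j, (S j < length l)%nat ->
     linked d omega N rho (nth j l 0) (nth (S j) l 0)).

Definition chain_linked (d : nat) (omega : nat -> R) (N : nat) (rho : R)
  (Gamma : C -> Prop) (a b : C) : Prop :=
  exists l, chain d omega N rho Gamma l /\
    nth 0 l 0 = a /\ nth (length l - 1) l 0 = b.

Definition odd_loop (d : nat) (omega : nat -> R) (N : nat) (rho : R)
  (E : C -> Prop) (l : list C) : Prop :=
  chain d omega N rho E l /\ (2 <= length l)%nat /\
  nth 0 l 0 = nth (length l - 1) l 0 /\ Nat.Odd (length l - 1).

Definition finite_card (Gamma : C -> Prop) (c : nat) : Prop :=
  exists l : list C, NoDup l /\ length l = c /\ (forall x, Gamma x <-> In x l).

Definition chain_class (d : nat) (omega : nat -> R) (N : nat) (rho : R)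
  (Gamma E : C -> Prop) : Prop :=
  exists a, Gamma a /\
    (forall x, E x <-> (Gamma x /\ chain_linked d omega N rho Gamma a x)).

From Stdlib Require Import Reals List ZArith Lia Lra Classical.
From Coquelicot Require Import Complex.
Open Scope R_scope.
Import ListNotations.

(* Fix a base point [a] of the class.  Without odd loops, the parity of the
   length of a walk from [a] to [x] inside the class depends only on [x];
   Sigma_1 and Sigma_2 are the points at even and odd parity.  Two linked
   points of equal parity would close an odd loop.  Between any two points
   of the class there is a walk, which can be taken without repeated points,
   hence of length m < #Gamma <= n, with parity given by the classes of its
   ends.  Links compose as: beta ~ gamma and gamma ~ delta give
   beta ~ conj delta, adding the N's and rho's; so a walk of length m links
   its ends up to one conjugation per step, with constants (m N, (m+1) rho). *)

Section Paths.
Context {A : Type} (r : A -> A -> Prop).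

Fixpoint path (x : A) (l : list A) : Prop :=
  match l with
  | [] => True
  | y :: t => r x y /\ path y t
  end.

Lemma last_cons (x y : A) (l : list A) : last (y :: l) x = last l y.
Proof.
  revert x y; induction l as [|z l IH]; intros x y; [reflexivity|].
  change (last (z :: l) x = last (z :: l) y). now rewrite !IH.
Qed.

Lemma last_cat (x : A) (l1 l2 : list A) : last (l1 ++ l2) x = last l2 (last l1 x).
Proof.
  revert x; induction l1 as [|y l1 IH]; intro x; [reflexivity|].
  rewrite <- app_comm_cons, !last_cons. apply IH.
Qed.

Lemma last_In (x : A) (l : list A) : In (last l x) (x :: l).
Proof.
  revert x; induction l as [|y l IH]; intro x; [now left|].
  rewrite last_cons. right. apply IH.
Qed.

Lemma nth_last (x d0 : A) (l : list A) :
  nth (length (x :: l) - 1) (x :: l) d0 = last l x.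
Proof.
  replace (length (x :: l) - 1)%nat with (length l) by (simpl; lia).
  revert x; induction l as [|y l IH]; intro x; [reflexivity|].
  rewrite last_cons. apply IH.
Qed.

Lemma path_app (x : A) (l1 l2 : list A) :
  path x (l1 ++ l2) <-> path x l1 /\ path (last l1 x) l2.
Proof.
  revert x; induction l1 as [|y l1 IH]; intro x; [simpl; tauto|].
  rewrite <- app_comm_cons, last_cons. simpl. rewrite IH. tauto.
Qed.

Lemma path_nth (x d0 : A) (l : list A) :
  path x l <-> forall j, (S j < length (x :: l))%nat ->
    r (nth j (x :: l) d0) (nth (S j) (x :: l) d0).
Proof.
  revert x; induction l as [|y l IH]; intro x; simpl.
  - split; [intros _ j Hj; lia|easy].
  - rewrite IH. split.
    + intros [Hxy Hl] [|j] Hj; [exact Hxy|]. apply Hl. simpl in *. lia.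
    + intros H. split; [apply (H 0%nat); lia|].
      intros j Hj. apply (H (S j)). simpl in *. lia.
Qed.

Lemma path_prefix (x y : A) (l : list A) :
  path x l -> In y (x :: l) -> exists q, incl q l /\ path x q /\ last q x = y.
Proof.
  intros Hl [<-|Hy]; [exists []; repeat split; apply incl_nil_l|].
  destruct (in_split _ _ Hy) as (l1 & l2 & ->).
  apply path_app in Hl as [Hl1 [Hy' _]].
  exists (l1 ++ [y]). repeat split.
  - intros z Hz. apply in_app_iff in Hz as [Hz|[<-|[]]]; apply in_app_iff; simpl; auto.
  - apply path_app. simpl. tauto.
  - apply last_last.
Qed.

Lemma path_rev (x : A) (l : list A) :
  (forall u v, r u v -> r v u) -> path x l ->
  exists l', path (last l x) l' /\ last l' (last l x) = x /\
    length l' = length l /\ incl l' (x :: l).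
Proof.
  intros r_sym; revert x; induction l as [|y l IH]; intros x Hl.
  - exists []. repeat split. apply incl_nil_l.
  - destruct Hl as [Hxy Hl]. destruct (IH y Hl) as (l' & Hp & Hlast & Hlen & Hincl).
    rewrite last_cons. exists (l' ++ [x]). repeat split.
    + apply path_app. rewrite Hlast. simpl. auto.
    + apply last_last.
    + rewrite length_app, Hlen. simpl. lia.
    + intros z Hz. apply in_app_iff in Hz as [Hz|[<-|[]]]; [right; apply Hincl, Hz|now left].
Qed.

(* Make the tail simple, then drop everything up to a second visit of [x]. *)
Lemma path_shorten (x : A) (l : list A) :
  path x l -> exists l', path x l' /\ last l' x = last l x /\ incl l' l /\ NoDup (x :: l').
Proof.
  revert x; induction l as [|y l IH]; intros x Hl.
  - exists []. repeat split; [apply incl_nil_l|]. repeat constructor. easy.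
  - destruct Hl as [Hxy Hl]. destruct (IH y Hl) as (l' & Hp & Hlast & Hincl & Hnd).
    rewrite last_cons.
    destruct (classic (In x (y :: l'))) as [Hx|Hx].
    + destruct (in_split _ _ Hx) as (l1 & l2 & Hsplit).
      assert (Hxl' : path x (l1 ++ x :: l2)) by (rewrite <- Hsplit; split; assumption).
      apply path_app in Hxl' as [_ [_ Hp2]].
      exists l2. repeat split.
      * exact Hp2.
      * rewrite <- Hlast, <- (last_cons x y l'), Hsplit, last_cat, last_cons.
        reflexivity.
      * intros z Hz. assert (Hz' : In z (y :: l')) by (rewrite Hsplit; apply in_app_iff; simpl; auto).
        destruct Hz' as [<-|Hz']; [now left|right; apply Hincl, Hz'].
      * rewrite Hsplit in Hnd. apply NoDup_app_remove_l in Hnd. exact Hnd.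
    + exists (y :: l'). repeat split; auto.
      * rewrite last_cons. exact Hlast.
      * apply incl_cons; [now left|]. intros z Hz. right. apply Hincl, Hz.
      * constructor; assumption.
Qed.
End Paths.

Section Bipartition.
Context {A : Type} (r : A -> A -> Prop) (E : A -> Prop) (a : A).
Hypothesis r_sym : forall x y, r x y -> r y x.
Hypothesis no_odd_closed_walk :
  forall x p, Forall E (x :: p) -> path r x p -> last p x = x -> ~ Nat.Odd (length p).

Definition walk_from (l : list A) (x : A) : Prop :=
  Forall E (a :: l) /\ path r a l /\ last l a = x.

Definition parity_class (s : bool) (x : A) : Prop :=
  exists l, walk_from l x /\ Nat.even (length l) = s.

Lemma walk_from_end (l : list A) (x : A) : walk_from l x -> E x.
Proof.
  intros (Hl & _ & <-). rewrite Forall_forall in Hl. apply Hl, last_In.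
Qed.

Lemma walk_from_app (l p : list A) (x : A) :
  walk_from l x -> Forall E p -> path r x p -> walk_from (l ++ p) (last p x).
Proof.
  intros (Hl & Hpl & <-) Hp Hpp. split; [|split].
  - rewrite app_comm_cons. apply Forall_app. auto.
  - apply path_app. auto.
  - apply last_cat.
Qed.

Lemma walk_from_even_length (l1 l2 : list A) (x : A) :
  walk_from l1 x -> walk_from l2 x -> Nat.even (length l1) = Nat.even (length l2).
Proof.
  intros W1 (F2 & P2 & L2).
  destruct (path_rev r a l2 r_sym P2) as (l2' & P2' & L2' & Hlen & Hincl).
  rewrite L2 in P2', L2'.
  assert (Hloop : walk_from (l1 ++ l2') a).
  { rewrite <- L2'. apply walk_from_app; [exact W1| |exact P2'].
    exact (incl_Forall Hincl F2). }
  destruct Hloop as (F & P & L).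
  assert (Heven : Nat.even (length (l1 ++ l2')) = true).
  { apply Nat.even_spec. destruct (Nat.Even_or_Odd (length (l1 ++ l2'))) as [|Hodd]; [easy|].
    exfalso. exact (no_odd_closed_walk a _ F P L Hodd). }
  rewrite length_app, Nat.even_add, Hlen in Heven. exact (Bool.eqb_prop _ _ Heven).
Qed.

Lemma parity_class_unique (s s' : bool) (x : A) :
  parity_class s x -> parity_class s' x -> s = s'.
Proof.
  intros (l & W & <-) (l' & W' & <-). exact (walk_from_even_length _ _ _ W W').
Qed.

Lemma parity_class_no_edge (s : bool) (b g : A) :
  parity_class s b -> parity_class s g -> ~ r b g.
Proof.
  intros (lb & Wb & Hb) (lg & Wg & Hg) Hbg.
  assert (Wbg : walk_from (lb ++ [g]) g).
  { apply (walk_from_app _ [g] b Wb); [constructor; [exact (walk_from_end _ _ Wg)|constructor]|].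
    split; [exact Hbg|exact I]. }
  pose proof (walk_from_even_length _ _ _ Wbg Wg) as Hpar.
  rewrite length_app, Nat.even_add, Hb, Hg in Hpar. destruct s; discriminate.
Qed.

(* Go back from [b] to [a], then on to [g], and shorten; the result still
   extends the walk to [b] into a walk to [g], which fixes its parity. *)
Lemma parity_class_path (s s' : bool) (b g : A) :
  parity_class s b -> parity_class s' g ->
  exists p, Forall E (b :: p) /\ path r b p /\ last p b = g /\ NoDup (b :: p) /\
    Nat.even (length p) = Bool.eqb s s'.
Proof.
  intros (lb & Wb & <-) (lg & Wg & <-).
  pose proof Wb as (Fb & Pb & Lb). pose proof Wg as (Fg & Pg & Lg).
  destruct (path_rev r a lb r_sym Pb) as (rb & Prb & Lrb & _ & Irb).
  rewrite Lb in Prb, Lrb.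
  assert (Pbg : path r b (rb ++ lg)) by (apply path_app; rewrite Lrb; auto).
  destruct (path_shorten r b _ Pbg) as (p & Pp & Lp & Ip & Np).
  rewrite last_cat, Lrb, Lg in Lp.
  assert (Fp : Forall E p).
  { apply (incl_Forall Ip), Forall_app. split.
    - exact (incl_Forall Irb Fb).
    - exact (Forall_inv_tail Fg). }
  exists p. split; [constructor; [exact (walk_from_end _ _ Wb)|exact Fp]|].
  split; [exact Pp|]. split; [exact Lp|]. split; [exact Np|].
  pose proof (walk_from_app _ _ _ Wb Fp Pp) as Wbg. rewrite Lp in Wbg.
  pose proof (walk_from_even_length _ _ _ Wbg Wg) as Hpar.
  rewrite length_app, Nat.even_add in Hpar.
  destruct (Nat.even (length lb)), (Nat.even (length p)), (Nat.even (length lg));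
    simpl in *; congruence.
Qed.

End Bipartition.

Section Linking.
Variables (d : nat) (omega : nat -> R).

Lemma l1norm_sub_le (k1 k2 : nat -> Z) :
  (l1norm d (fun i => k1 i - k2 i)%Z <= l1norm d k1 + l1norm d k2)%Z.
Proof. unfold l1norm. induction (seq 0 d); simpl; lia. Qed.

Lemma l1norm_0 : l1norm d (fun _ => 0%Z) = 0%Z.
Proof. unfold l1norm. induction (seq 0 d); simpl in *; lia. Qed.

Lemma dotZR_sub (k1 k2 : nat -> Z) :
  dotZR d (fun i => k1 i - k2 i)%Z omega = dotZR d k1 omega - dotZR d k2 omega.
Proof. unfold dotZR. induction (seq 0 d); simpl; [ring|]. rewrite IHl, minus_IZR. ring. Qed.

Lemma dotZR_0 : dotZR d (fun _ => 0%Z) omega = 0.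
Proof. unfold dotZR. induction (seq 0 d); simpl; [ring|]. rewrite IHl. ring. Qed.

Lemma Cconj_Ci_RtoC (x : R) : Cconj (Ci * RtoC x) = (- (Ci * RtoC x))%C.
Proof. apply injective_projections; simpl; ring. Qed.

Lemma linked_sym (N : nat) (rho : R) (a b : C) :
  linked d omega N rho a b -> linked d omega N rho b a.
Proof.
  intros (k & Hk & Hc). exists k. split; [exact Hk|].
  set (w := (Ci * RtoC (2 * PI * dotZR d k omega))%C) in *.
  replace (w - (b - Cconj a))%C with (- Cconj (w - (a - Cconj b)))%C.
  - rewrite Cmod_opp, Cmod_conj. exact Hc.
  - rewrite !Cminus_conj, Cconj_conj. unfold w. rewrite Cconj_Ci_RtoC. ring.
Qed.

(* The phases are purely imaginary, so conjugating the second link reverses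
   its frequency while the middle point cancels. *)
Lemma linked_conj_trans (N1 N2 : nat) (rho1 rho2 : R) (a b c : C) :
  linked d omega N1 rho1 a b -> linked d omega N2 rho2 b c ->
  linked d omega (N1 + N2) (rho1 + rho2) a (Cconj c).
Proof.
  intros (k1 & Hk1 & Hc1) (k2 & Hk2 & Hc2).
  exists (fun i => k1 i - k2 i)%Z. split.
  - pose proof (l1norm_sub_le k1 k2). lia.
  - set (w1 := (Ci * RtoC (2 * PI * dotZR d k1 omega))%C) in *.
    set (w2 := (Ci * RtoC (2 * PI * dotZR d k2 omega))%C) in *.
    replace (Ci * RtoC (2 * PI * dotZR d (fun i => k1 i - k2 i)%Z omega) -
             (a - Cconj (Cconj c)))%C
      with ((w1 - (a - Cconj b)) + Cconj (w2 - (b - Cconj c)))%C.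
    + eapply Rle_lt_trans; [apply Cmod_triangle|]. rewrite Cmod_conj. lra.
    + rewrite Cminus_conj, Cminus_conj, !Cconj_conj, dotZR_sub. unfold w1, w2.
      rewrite Cconj_Ci_RtoC.
      apply injective_projections; simpl; ring.
Qed.

Lemma linked_conj_refl (rho : R) (a : C) : 0 < rho -> linked d omega 0 rho a (Cconj a).
Proof.
  intro Hrho. exists (fun _ => 0%Z). rewrite l1norm_0, dotZR_0, Cconj_conj. split; [lia|].
  replace (Ci * RtoC (2 * PI * 0) - (a - a))%C with (RtoC 0).
  - rewrite Cmod_0. exact Hrho.
  - apply injective_projections; simpl; ring.
Qed.

Lemma linked_weaken (N1 N2 : nat) (rho1 rho2 : R) (a b : C) :
  (N1 <= N2)%nat -> rho1 <= rho2 ->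
  linked d omega N1 rho1 a b -> linked d omega N2 rho2 a b.
Proof.
  intros HN Hrho (k & Hk & Hc). exists k. split; [lia|lra].
Qed.

Lemma iter_Cconj (m : nat) (z : C) :
  Nat.iter m Cconj z = if Nat.even m then z else Cconj z.
Proof.
  induction m as [|m IH]; [reflexivity|].
  change (Cconj (Nat.iter m Cconj z) = if Nat.even (S m) then z else Cconj z).
  rewrite IH, Nat.even_succ, <- Nat.negb_even.
  destruct (Nat.even m); simpl; [reflexivity|apply Cconj_conj].
Qed.

Lemma linked_path (N : nat) (rho : R) (b : C) (p : list C) :
  0 < rho -> path (linked d omega N rho) b p ->
  linked d omega (length p * N) (INR (S (length p)) * rho) b
    (Nat.iter (S (length p)) Cconj (last p b)).
Proof.
  intro Hrho; revert b; induction p as [|y p IH]; intros b Hp.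
  - simpl. rewrite Rmult_1_l. exact (linked_conj_refl rho b Hrho).
  - destruct Hp as [Hby Hp]. rewrite last_cons.
    replace (INR (S (length (y :: p))) * rho) with (rho + INR (S (length p)) * rho)
      by (simpl length; rewrite (S_INR (S _)); ring).
    exact (linked_conj_trans _ _ _ _ _ _ _ Hby (IH y Hp)).
Qed.

Lemma linked_short_path (N n : nat) (rho : R) (b : C) (p : list C) :
  0 < rho -> path (linked d omega N rho) b p -> (length p < n)%nat ->
  linked d omega (n * N) (INR n * rho) b
    (if Nat.even (length p) then Cconj (last p b) else last p b).
Proof.
  intros Hrho Hp Hn.
  pose proof (linked_path N rho b p Hrho Hp) as Hlink.
  rewrite iter_Cconj, Nat.even_succ, <- Nat.negb_even in Hlink.
  assert (HnN : (length p * N <= n * N)%nat) by (apply Nat.mul_le_mono_r; lia).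
  assert (Hnrho : INR (S (length p)) * rho <= INR n * rho)
    by (apply Rmult_le_compat_r; [lra|apply le_INR; lia]).
  destruct (Nat.even (length p)); exact (linked_weaken _ _ _ _ _ _ HnN Hnrho Hlink).
Qed.

End Linking.

Section Chains.
Variables (d : nat) (omega : nat -> R) (N : nat) (rho : R).

Lemma chain_cons (G : C -> Prop) (x : C) (p : list C) :
  chain d omega N rho G (x :: p) <->
  Forall G (x :: p) /\ path (linked d omega N rho) x p.
Proof.
  unfold chain. rewrite Forall_forall, (path_nth _ x 0). split; [tauto|].
  intros [HG Hp]. split; [easy|auto].
Qed.

Lemma chain_linked_path (G : C -> Prop) (a x : C) :
  chain_linked d omega N rho G a x <->
  exists p, Forall G (a :: p) /\ path (linked d omega N rho) a p /\ last p a = x.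
Proof.
  split.
  - intros ([|a' p] & Hchain & Ha & Hx); [destruct Hchain as [[] _]; reflexivity|].
    simpl in Ha. subst a'. apply chain_cons in Hchain as [HG Hp].
    exists p. split; [exact HG|split; [exact Hp|]].
    rewrite <- Hx. symmetry. apply nth_last.
  - intros (p & HG & Hp & Hx). exists (a :: p). split; [apply chain_cons; auto|].
    split; [reflexivity|]. rewrite nth_last. exact Hx.
Qed.

Lemma odd_loop_of_path (E : C -> Prop) (x : C) (p : list C) :
  Forall E (x :: p) -> path (linked d omega N rho) x p -> last p x = x ->
  Nat.Odd (length p) -> odd_loop d omega N rho E (x :: p).
Proof.
  intros HE Hp Hx Hodd. split; [apply chain_cons; auto|].
  rewrite nth_last, Hx. simpl. rewrite Nat.sub_0_r.
  destruct Hodd as [m ->]. repeat split; [lia|exact (ex_intro _ m eq_refl)].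
Qed.

Lemma chain_class_walks (Gamma E : C -> Prop) (a : C) :
  Gamma a -> (forall x, E x <-> Gamma x /\ chain_linked d omega N rho Gamma a x) ->
  forall x, E x <-> exists l, walk_from (linked d omega N rho) E a l x.
Proof.
  intros Ga HE x. split.
  - intros Ex. apply HE in Ex as [_ Hx]. apply chain_linked_path in Hx as (p & HG & Hp & Hx).
    exists p. split; [|auto]. apply Forall_forall. intros y Hy. apply HE. split.
    + rewrite Forall_forall in HG. auto.
    + apply chain_linked_path. destruct (path_prefix _ _ _ _ Hp Hy) as (q & Hq & Hpq & Hy').
      exists q. split; [|auto]. constructor; [exact Ga|].
      exact (incl_Forall Hq (Forall_inv_tail HG)).
  - intros (l & Hl). exact (walk_from_end _ _ _ _ _ Hl).
Qed.

End Chains.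

Lemma NoDup_length_le_card (G : C -> Prop) (c : nat) (l : list C) :
  finite_card G c -> NoDup l -> Forall G l -> (length l <= c)%nat.
Proof.
  intros (L & _ & <- & HG) Hnd Hl. apply (NoDup_incl_length Hnd).
  intros y Hy. apply HG. rewrite Forall_forall in Hl. auto.
Qed.

Theorem lemma13 (d : nat) (omega : nat -> R) (N : nat) (rho : R) (n : nat)
  (Gamma : C -> Prop) :
  0 < rho -> (1 <= n)%nat ->
  (exists c, (0 < c)%nat /\ (c <= n)%nat /\ finite_card Gamma c) ->
  (forall a, Gamma a -> exists b, Gamma b /\ linked d omega N rho a b) ->
  forall E : C -> Prop, chain_class d omega N rho Gamma E ->
  (~ exists l, odd_loop d omega N rho E l) ->
  exists S1 S2 : C -> Prop,
    (forall x, E x <-> (S1 x \/ S2 x)) /\ (forall x, ~ (S1 x /\ S2 x)) /\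
    (forall b g, S1 b -> S1 g -> ~ linked d omega N rho b g) /\
    (forall b g, S2 b -> S2 g -> ~ linked d omega N rho b g) /\
    (forall b g, S1 b -> S1 g ->
       linked d omega (n * N) (INR n * rho) b (Cconj g)) /\
    (forall b g, S2 b -> S2 g ->
       linked d omega (n * N) (INR n * rho) b (Cconj g)) /\
    (forall b g, S1 b -> S2 g ->
       linked d omega (n * N) (INR n * rho) b g).
Proof.
  intros Hrho _ (c & _ & Hcn & Hcard) _ E (a & Ga & HE) Hno.
  set (lk := linked d omega N rho).
  set (class := parity_class lk E a).
  assert (Hwalk := chain_class_walks d omega N rho Gamma E a Ga HE).
  assert (Hsym : forall x y, lk x y -> lk y x) by apply linked_sym.
  assert (Hodd : forall x p, Forall E (x :: p) -> path lk x p -> last p x = x ->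
                   ~ Nat.Odd (length p))
    by (intros x p HEp Hp Hx Hodd; apply Hno; eexists; apply odd_loop_of_path; eauto).
  assert (Hfar : forall s s' b g, class s b -> class s' g ->
            linked d omega (n * N) (INR n * rho) b (if Bool.eqb s s' then Cconj g else g)).
  { intros s s' b g Hb Hg.
    destruct (parity_class_path lk E a Hsym Hodd s s' b g Hb Hg)
      as (p & HEp & Hp & <- & Hnd & <-).
    apply (linked_short_path d omega N n rho b p Hrho Hp).
    enough (length (b :: p) <= c)%nat by (simpl in *; lia).
    apply (NoDup_length_le_card Gamma c _ Hcard Hnd).
    apply (Forall_impl _ (fun y Ey => proj1 (proj1 (HE y) Ey)) HEp). }
  exists (class true), (class false).
  split; [|split; [|split; [|split; [|split; [|split]]]]].
  - intro x. rewrite Hwalk. split.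
    + intros (l & Hl). destruct (Nat.even (length l)) eqn:Hpar; [left|right]; exists l; auto.
    + intros [(l & Hl & _)|(l & Hl & _)]; exists l; exact Hl.
  - intros x [H1 H2]. discriminate (parity_class_unique lk E a Hsym Hodd _ _ x H1 H2).
  - exact (parity_class_no_edge lk E a Hsym Hodd true).
  - exact (parity_class_no_edge lk E a Hsym Hodd false).
  - exact (Hfar true true).
  - exact (Hfar false false).
  - exact (Hfar true false).
Qed.
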